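(* Let $(M,\varphi,\xi,\eta,g)$ be a $3$-dimensional $f$-Kenmotsu manifold and let $\gamma(s):I\to M$ be a non-geodesic, arc-length parametrized Frenet curve with Frenet frame $\{T,N,B\}$, curvature $k_1=k_1(s)$ and torsion $k_2=k_2(s)$. Put $A:=\frac{r}{2}+2(f^2+f')$ and $\Lambda:=\frac{r}{2}+3(f^2+f')$. Then $\gamma$ is a triharmonic curve if and only if \begin{align*} &k_1k_1'''+2k_1'k_1''-2k_1^3k_1'-k_2^2k_1k_1'-k_1^2k_2k_2'=0,\\ &k_1^{(4)}-10k_1^2k_1''-6k_2^2k_1''-4k_1k_2k_2''-15k_1(k_1')^2-12k_2k_2'k_1'-3k_1(k_2')^2+k_1^5+k_1k_2^4+2k_1^3k_2^2\\ &\quad+(k_1''-2k_1^3-k_1k_2^2)\big(A-\Lambda(\eta(T)^2+\eta(N)^2)\big)-\big(k_1^2k_2\eta(T)+(2k_2k_1'+k_1k_2')\eta(N)\big)\Lambda\,\eta(B)=0,\\ &4k_2k_1'''+6k_1''k_2'+4k_1'k_2''-9k_1^2k_2k_1'-4k_2^3k_1'-6k_1k_2^2k_2'-k_2'k_1^3+k_1k_2'''\\ &\quad+(2k_1'k_2+k_1k_2')\big(A-\Lambda(\eta(T)^2+\eta(B)^2)\big)+\big(k_1^2k_2\eta(T)-(k_1''-2k_1^3-k_1k_2^2)\eta(B)\big)\Lambda\,\eta(N)=0. \end{align*}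
   Context: An almost contact metric manifold $(M^{2n+1},\varphi,\xi,\eta,g)$ has a $(1,1)$-tensor $\varphi$, vector field $\xi$, $1$-form $\eta$ and Riemannian metric $g$ with $\varphi^2=-I+\eta\otimes\xi$, $\eta(\xi)=1$, $\varphi\xi=0$, $\eta\circ\varphi=0$, $\eta(X)=g(X,\xi)$, $g(\varphi X,\varphi Y)=g(X,Y)-\eta(X)\eta(Y)$. It is an $f$-Kenmotsu manifold if the Levi-Civita connection satisfies $(\nabla_X\varphi)Y=f(g(\varphi X,Y)\xi-\eta(Y)\varphi X)$ and $\nabla_X\xi=f(X-\eta(X)\xi)$ for a smooth function $f$ with $df\wedge\eta=0$. In dimension 3 its curvature tensor is $R(X,Y)Z=(\frac r2+2(f^2+f'))(g(Y,Z)X-g(X,Z)Y)-(\frac r2+3(f^2+f'))(g(Y,Z)\eta(X)\xi-g(X,Z)\eta(Y)\xi-\eta(X)\eta(Z)Y+\eta(Y)\eta(Z)X)$, where $r$ is the scalar curvature and $f'$ denotes the derivative of $f$; along the curve $f,f',r$ are regarded as functions of the arc-length $s$. A Frenet curve satisfies $\nabla_TT=k_1N$, $\nabla_TN=-k_1T+k_2B$, $\nabla_TB=-k_2N$, $T=\gamma'$. An arc-length parametrized curve is triharmonic if $\tau_3(\gamma):=\nabla_T^5T+R(\nabla_T^3T,T)T-R(\nabla_T^2T,\nabla_TT)T=0$. Primes on $k_1,k_2$ denote derivatives in $s$. *)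

From Stdlib Require Import Reals.
From Coquelicot Require Import Coquelicot.
Open Scope R_scope.

(* Tangent vectors along the curve, expressed in a parallel orthonormal
   frame along gamma.  In such a frame the Levi-Civita
   covariant derivative nabla_T along gamma is the componentwise derivative
   in s and g is the Euclidean dot product. *)
Record vec := mkV { vx : R ; vy : R ; vz : R }.

Definition vadd (u v : vec) : vec := mkV (vx u + vx v) (vy u + vy v) (vz u + vz v).
Definition vscal (a : R) (u : vec) : vec := mkV (a * vx u) (a * vy u) (a * vz u).
Definition vsub (u v : vec) : vec := vadd u (vscal (-1) v).
Definition vzero : vec := mkV 0 0 0.
Definition dot (u v : vec) : R := vx u * vx v + vy u * vy v + vz u * vz v.

Definition Dn (n : nat) (F : R -> vec) (s : R) : vec :=
  mkV (Derive_n (fun t => vx (F t)) n s)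
      (Derive_n (fun t => vy (F t)) n s)
      (Derive_n (fun t => vz (F t)) n s).

Definition vis_derive (F : R -> vec) (s : R) (G : vec) : Prop :=
  is_derive (fun t => vx (F t)) s (vx G) /\
  is_derive (fun t => vy (F t)) s (vy G) /\
  is_derive (fun t => vz (F t)) s (vz G).

Definition Acoef (r f fp : R) : R := r / 2 + 2 * (f ^ 2 + fp).
Definition Lcoef (r f fp : R) : R := r / 2 + 3 * (f ^ 2 + fp).

(* Curvature tensor of a 3-dimensional f-Kenmotsu manifold at a point
   where xi takes value xi0, eta(X) = g(X, xi0):
   R(X,Y)Z = A (g(Y,Z)X - g(X,Z)Y)
           - Lambda (g(Y,Z)eta(X)xi - g(X,Z)eta(Y)xi - eta(X)eta(Z)Y + eta(Y)eta(Z)X) *)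
Definition Rcurv (A L : R) (xi0 : vec) (X Y Z : vec) : vec :=
  let eta := fun V => dot V xi0 in
  vsub (vadd (vscal (A * dot Y Z) X) (vscal (- (A * dot X Z)) Y))
       (vscal L
          (vadd (vadd (vscal (dot Y Z * eta X) xi0) (vscal (- (dot X Z * eta Y)) xi0))
                (vadd (vscal (- (eta X * eta Z)) Y) (vscal (eta Y * eta Z) X)))).

Definition tau3 (A L : R) (xi0 : vec) (T : R -> vec) (s : R) : vec :=
  vadd (Dn 5 T s)
       (vsub (Rcurv A L xi0 (Dn 3 T s) (T s) (T s))
             (Rcurv A L xi0 (Dn 2 T s) (Dn 1 T s) (T s))).

Definition inI (a b : Rbar) (s : R) : Prop := Rbar_lt a s /\ Rbar_lt s b.

From Stdlib Require Import Reals Lra Lia.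
From Coquelicot Require Import Coquelicot.
Open Scope R_scope.

(* In the Frenet frame, the derivative of [a T + c N + e B] is
   [(a' - k1 c) T + (k1 a + c' - k2 e) N + (k2 c + e') B]. Iterating from [T],
   the coordinates of [nabla_T^n T] are polynomials in the derivatives of [k1]
   and [k2]. The curvature terms [R(X,T)T] are orthogonal to [T], so the
   T-coordinate of [tau_3] is that of [nabla_T^5 T], namely [-5] times the first
   expression of the statement; expanding the curvature tensor, the N- and
   B-coordinates are exactly the other two. As the frame is orthonormal,
   [tau_3] vanishes iff its three coordinates do. *)

Definition in_frame (c T N B : vec) : vec :=
  vadd (vscal (vx c) T) (vadd (vscal (vy c) N) (vscal (vz c) B)).

Definition frenet_action (k1 k2 : R) (c : vec) : vec :=
  mkV (- k1 * vy c) (k1 * vx c - k2 * vz c) (k2 * vy c).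

Definition orthonormal (T N B : vec) : Prop :=
  dot T T = 1 /\ dot N N = 1 /\ dot B B = 1 /\
  dot T N = 0 /\ dot T B = 0 /\ dot N B = 0.

Definition cross (u v : vec) : vec :=
  mkV (vy u * vz v - vz u * vy v) (vz u * vx v - vx u * vz v)
      (vx u * vy v - vy u * vx v).

Lemma vsubK (u v : vec) : vadd (vsub u v) v = u.
Proof. destruct u, v; unfold vsub, vadd, vscal; cbn; f_equal; ring. Qed.

Lemma dot_comm (u v : vec) : dot u v = dot v u.
Proof. destruct u, v; unfold dot; cbn; ring. Qed.

Lemma dot_vaddl (u v w : vec) : dot (vadd u v) w = dot u w + dot v w.
Proof. destruct u, v, w; unfold dot; cbn; ring. Qed.

Lemma dot_vsubl (u v w : vec) : dot (vsub u v) w = dot u w - dot v w.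
Proof. destruct u, v, w; unfold dot; cbn; ring. Qed.

Lemma dot_vzerol (w : vec) : dot vzero w = 0.
Proof. destruct w; unfold dot; cbn; ring. Qed.

Lemma dot_in_frame (c T N B W : vec) :
  dot (in_frame c T N B) W = vx c * dot T W + vy c * dot N W + vz c * dot B W.
Proof. destruct c, T, N, B, W; unfold dot; cbn; ring. Qed.

Lemma dot_Rcurv (A L : R) (xi X Y Z W : vec) :
  dot (Rcurv A L xi X Y Z) W =
  A * (dot Y Z * dot X W - dot X Z * dot Y W)
  - L * (dot Y Z * dot X xi * dot W xi - dot X Z * dot Y xi * dot W xi
         - dot X xi * dot Z xi * dot Y W + dot Y xi * dot Z xi * dot X W).
Proof. destruct xi, X, Y, Z, W; unfold Rcurv, dot; cbn; ring. Qed.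

Section OrthonormalFrame.
Variables T N B : vec.
Hypothesis ON : orthonormal T N B.

Lemma dot_in_frame_frame (c : vec) :
  dot (in_frame c T N B) T = vx c /\ dot (in_frame c T N B) N = vy c /\
  dot (in_frame c T N B) B = vz c.
Proof.
  destruct ON as [TT [NN [BB [TN [TB NB]]]]].
  rewrite !dot_in_frame, TT, NN, BB, (dot_comm N T), (dot_comm B T), (dot_comm B N),
    TN, TB, NB.
  repeat split; ring.
Qed.

(* Cramer's rule: [det(T,N,B) v] is a combination of the [v . X], and
   [det(T,N,B)^2] is the Gram determinant, i.e. [1]. *)
Lemma orthonormal_eq_vzero (v : vec) :
  dot v T = 0 -> dot v N = 0 -> dot v B = 0 -> v = vzero.
Proof.
  destruct ON as [TT [NN [BB [TN [TB NB]]]]].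
  set (D := dot T (cross N B)).
  assert (DD : D * D = 1).
  { assert (Gram : D * D =
      dot T T * (dot N N * dot B B - dot N B ^ 2)
      - dot T N * (dot T N * dot B B - dot N B * dot T B)
      + dot T B * (dot T N * dot N B - dot N N * dot T B)).
    { unfold D; destruct T, N, B; unfold dot, cross; cbn; ring. }
    rewrite Gram, TT, NN, BB, TN, TB, NB; ring. }
  assert (Dv : vscal D v =
    in_frame (mkV (dot v T) (dot v N) (dot v B)) (cross N B) (cross B T) (cross T N)).
  { unfold D; destruct T, N, B, v; unfold in_frame, dot, cross, vscal, vadd; cbn;
      f_equal; ring. }
  intros vT vN vB.
  rewrite vT, vN, vB in Dv.
  replace v with (vscal D (vscal D v)).
  - rewrite Dv. unfold in_frame, vscal, vadd, vzero; cbn. f_equal; ring.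
  - destruct v; unfold vscal; cbn. rewrite <- !Rmult_assoc, DD. f_equal; ring.
Qed.

End OrthonormalFrame.

Lemma is_derive_sum_of_products (a b c x y z : R -> R) (s da db dc dx dy dz v : R) :
  is_derive a s da -> is_derive b s db -> is_derive c s dc ->
  is_derive x s dx -> is_derive y s dy -> is_derive z s dz ->
  v = da * x s + a s * dx + (db * y s + b s * dy + (dc * z s + c s * dz)) ->
  is_derive (fun t => a t * x t + (b t * y t + c t * z t)) s v.
Proof.
  intros Ha Hb Hc Hx Hy Hz ->.
  auto_derive; [repeat split; eexists; eassumption |].
  repeat match goal with
  | H : is_derive ?f s ?l |- context [Derive ?g s] =>
      rewrite (is_derive_unique g s l H) end.
  ring.
Qed.

Lemma in_frame_derive (T N B c : R -> vec) (k1 k2 s : R) (dc : vec) :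
  vis_derive T s (vscal k1 (N s)) ->
  vis_derive N s (vadd (vscal (- k1) (T s)) (vscal k2 (B s))) ->
  vis_derive B s (vscal (- k2) (N s)) ->
  vis_derive c s dc ->
  vis_derive (fun t => in_frame (c t) (T t) (N t) (B t)) s
    (in_frame (vadd dc (frenet_action k1 k2 (c s))) (T s) (N s) (B s)).
Proof.
  intros [Tx [Ty Tz]] [Nx [Ny Nz]] [Bx [By Bz]] [cx [cy cz]].
  unfold vis_derive, in_frame, vadd, vscal; cbn.
  split; [|split]; (eapply is_derive_sum_of_products; [eassumption .. |]);
    unfold frenet_action, vadd, vscal; cbn; ring.
Qed.

Lemma Derive_n_S_loc (f g : R -> R) (n : nat) (s l : R) :
  locally s (fun t => Derive_n f n t = g t) -> is_derive g s l ->
  Derive_n f (S n) s = l.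
Proof.
  intros fg Hg. change (Derive (Derive_n f n) s = l).
  rewrite (Derive_ext_loc _ g s fg). exact (is_derive_unique _ _ _ Hg).
Qed.

Lemma Dn_S_loc (F G : R -> vec) (n : nat) (s : R) (dG : vec) :
  locally s (fun t => Dn n F t = G t) -> vis_derive G s dG -> Dn (S n) F s = dG.
Proof.
  intros FG [Gx [Gy Gz]]. destruct dG as [x y z]. unfold Dn.
  f_equal; eapply Derive_n_S_loc; try eassumption;
    (eapply filter_imp; [| exact FG]); intros t Ht; rewrite <- Ht; reflexivity.
Qed.

Section Jets.
Variables (k1 k2 : R -> R) (s : R).
Local Notation "'κ' j" := (Derive_n k1 j s) (at level 0, j at level 0).
Local Notation "'τ' j" := (Derive_n k2 j s) (at level 0, j at level 0).

Definition triharmonic_T : R :=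
  κ 0 * κ 3 + 2 * κ 1 * κ 2 - 2 * κ 0 ^ 3 * κ 1
  - τ 0 ^ 2 * κ 0 * κ 1 - κ 0 ^ 2 * τ 0 * τ 1.

(* Only the orders [n <= 5] are meaningful. *)
Definition nablaT_coords (n : nat) : vec :=
  match n with
  | 0 => mkV 1 0 0
  | 1 => mkV 0 (κ 0) 0
  | 2 => mkV (- κ 0 ^ 2) (κ 1) (κ 0 * τ 0)
  | 3 => mkV (- 3 * κ 0 * κ 1) (κ 2 - κ 0 ^ 3 - κ 0 * τ 0 ^ 2) (2 * κ 1 * τ 0 + κ 0 * τ 1)
  | 4 => mkV (κ 0 ^ 4 + κ 0 ^ 2 * τ 0 ^ 2 - 3 * κ 1 ^ 2 - 4 * κ 0 * κ 2)
             (κ 3 - 6 * κ 0 ^ 2 * κ 1 - 3 * κ 1 * τ 0 ^ 2 - 3 * κ 0 * τ 0 * τ 1)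
             (3 * κ 2 * τ 0 + 3 * κ 1 * τ 1 + κ 0 * τ 2 - κ 0 ^ 3 * τ 0 - κ 0 * τ 0 ^ 3)
  | 5 => mkV (-5 * triharmonic_T)
             (κ 4 - 10 * κ 0 ^ 2 * κ 2 - 6 * τ 0 ^ 2 * κ 2
              - 4 * κ 0 * τ 0 * τ 2 - 15 * κ 0 * κ 1 ^ 2
              - 12 * τ 0 * τ 1 * κ 1 - 3 * κ 0 * τ 1 ^ 2
              + κ 0 ^ 5 + κ 0 * τ 0 ^ 4 + 2 * κ 0 ^ 3 * τ 0 ^ 2)
             (4 * τ 0 * κ 3 + 6 * κ 2 * τ 1 + 4 * κ 1 * τ 2
              - 9 * κ 0 ^ 2 * τ 0 * κ 1 - 4 * τ 0 ^ 3 * κ 1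
              - 6 * κ 0 * τ 0 ^ 2 * τ 1 - τ 1 * κ 0 ^ 3 + κ 0 * τ 3)
  | _ => vzero
  end.

Definition triharmonic_N (A L eT eN eB : R) : R :=
  vy (nablaT_coords 5)
  + (κ 2 - 2 * κ 0 ^ 3 - κ 0 * τ 0 ^ 2) * (A - L * (eT ^ 2 + eN ^ 2))
  - (κ 0 ^ 2 * τ 0 * eT + (2 * τ 0 * κ 1 + κ 0 * τ 1) * eN) * L * eB.

Definition triharmonic_B (A L eT eN eB : R) : R :=
  vz (nablaT_coords 5)
  + (2 * κ 1 * τ 0 + κ 0 * τ 1) * (A - L * (eT ^ 2 + eB ^ 2))
  + (κ 0 ^ 2 * τ 0 * eT - (κ 2 - 2 * κ 0 ^ 3 - κ 0 * τ 0 ^ 2) * eB) * L * eN.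

End Jets.

Section FrenetCurve.
Variables (P : R -> Prop) (k1 k2 : R -> R) (T N B : R -> vec).
Hypothesis P_open : forall s, P s -> locally s P.
Hypothesis k1_smooth : forall s, P s -> forall n, ex_derive_n k1 n s.
Hypothesis k2_smooth : forall s, P s -> forall n, ex_derive_n k2 n s.
Hypothesis frenet_T : forall s, P s -> vis_derive T s (vscal (k1 s) (N s)).
Hypothesis frenet_N : forall s, P s ->
  vis_derive N s (vadd (vscal (- k1 s) (T s)) (vscal (k2 s) (B s))).
Hypothesis frenet_B : forall s, P s -> vis_derive B s (vscal (- k2 s) (N s)).

Lemma nablaT_coords_derive (n : nat) (s : R) : (n < 5)%nat -> P s ->
  vis_derive (fun t => nablaT_coords k1 k2 t n) s
    (vsub (nablaT_coords k1 k2 s (S n))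
          (frenet_action (k1 s) (k2 s) (nablaT_coords k1 k2 s n))).
Proof.
  intros Hn Ps.
  assert (ex1 : forall j, ex_derive (fun t => Derive_n k1 j t) s)
    by (intro j; apply (k1_smooth s Ps (S j))).
  assert (ex2 : forall j, ex_derive (fun t => Derive_n k2 j t) s)
    by (intro j; apply (k2_smooth s Ps (S j))).
  assert (D1 : forall j, Derive (fun t => Derive_n k1 j t) s = Derive_n k1 (S j) s)
    by reflexivity.
  assert (D2 : forall j, Derive (fun t => Derive_n k2 j t) s = Derive_n k2 (S j) s)
    by reflexivity.
  destruct n as [|[|[|[|[|n]]]]]; try lia;
    unfold vis_derive, nablaT_coords, triharmonic_T, frenet_action, vsub, vadd, vscal;
    cbn [vx vy vz];
    change (k1 s) with (Derive_n k1 0 s); change (k2 s) with (Derive_n k2 0 s);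
    (* freeze the jets so that [auto_derive] treats them as opaque functions *)
    set (J1 := Derive_n k1) in *; set (J2 := Derive_n k2) in *; clearbody J1 J2;
    (split; [|split]); auto_derive;
    try (repeat split; match goal with
                       | |- ex_derive (fun t => J1 _ t) _ => apply ex1
                       | |- ex_derive (fun t => J2 _ t) _ => apply ex2
                       end);
    rewrite ?D1, ?D2; ring.
Qed.

Lemma Dn_T_in_frame (n : nat) (s : R) : (n <= 5)%nat -> P s ->
  Dn n T s = in_frame (nablaT_coords k1 k2 s n) (T s) (N s) (B s).
Proof.
  revert s; induction n as [|n IH]; intros s Hn Ps.
  - unfold Dn, in_frame, nablaT_coords, vadd, vscal; cbn.
    destruct (T s), (N s), (B s); cbn; f_equal; ring.
  - apply Dn_S_loc with
      (G := fun t => in_frame (nablaT_coords k1 k2 t n) (T t) (N t) (B t)).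
    + eapply filter_imp; [| exact (P_open s Ps)].
      intros t Pt; apply IH; [lia | exact Pt].
    + rewrite <- (vsubK (nablaT_coords k1 k2 s (S n))
        (frenet_action (k1 s) (k2 s) (nablaT_coords k1 k2 s n))).
      apply in_frame_derive; auto.
      apply nablaT_coords_derive; [lia | exact Ps].
Qed.

End FrenetCurve.

Section Tau3InFrame.
Variables (A L : R) (xi : vec) (k1 k2 : R -> R) (T : R -> vec) (N B : vec) (s : R).
Hypothesis ON : orthonormal (T s) N B.
Hypothesis nablaT : forall n, (n <= 5)%nat ->
  Dn n T s = in_frame (nablaT_coords k1 k2 s n) (T s) N B.

Lemma tau3_frame_coords :
  dot (tau3 A L xi T s) (T s) = -5 * triharmonic_T k1 k2 s /\
  dot (tau3 A L xi T s) N =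
    triharmonic_N k1 k2 s A L (dot (T s) xi) (dot N xi) (dot B xi) /\
  dot (tau3 A L xi T s) B =
    triharmonic_B k1 k2 s A L (dot (T s) xi) (dot N xi) (dot B xi).
Proof.
  unfold tau3; rewrite (nablaT 5), (nablaT 3), (nablaT 2), (nablaT 1) by lia.
  rewrite !dot_vaddl, !dot_vsubl, !dot_Rcurv.
  destruct (dot_in_frame_frame _ _ _ ON (nablaT_coords k1 k2 s 1)) as [-> [-> ->]].
  destruct (dot_in_frame_frame _ _ _ ON (nablaT_coords k1 k2 s 2)) as [-> [-> ->]].
  destruct (dot_in_frame_frame _ _ _ ON (nablaT_coords k1 k2 s 3)) as [-> [-> ->]].
  destruct (dot_in_frame_frame _ _ _ ON (nablaT_coords k1 k2 s 5)) as [-> [-> ->]].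
  destruct ON as [TT [_ [_ [TN [TB _]]]]].
  rewrite !dot_in_frame, TT, TN, TB.
  unfold triharmonic_N, triharmonic_B, nablaT_coords, triharmonic_T; cbn [vx vy vz].
  repeat split; ring.
Qed.

Lemma tau3_eq_vzero_iff :
  tau3 A L xi T s = vzero <->
  triharmonic_T k1 k2 s = 0 /\
  triharmonic_N k1 k2 s A L (dot (T s) xi) (dot N xi) (dot B xi) = 0 /\
  triharmonic_B k1 k2 s A L (dot (T s) xi) (dot N xi) (dot B xi) = 0.
Proof.
  destruct tau3_frame_coords as [cT [cN cB]].
  split.
  - intros tau0; rewrite tau0, dot_vzerol in cT, cN, cB.
    repeat split; lra.
  - intros [hT [hN hB]].
    apply (orthonormal_eq_vzero (T s) N B ON).
    + rewrite cT, hT; ring.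
    + rewrite cN; exact hN.
    + rewrite cB; exact hB.
Qed.

End Tau3InFrame.

Theorem theorem1
  (a b : Rbar)
  (r f fp : R -> R)            (* scalar curvature, f, f' along gamma, as functions of s *)
  (xi : R -> vec)              (* the Reeb field xi along gamma *)
  (T N B : R -> vec)           (* Frenet frame along gamma, T = gamma' *)
  (k1 k2 : R -> R)             (* curvature and torsion *)
  (Hab : Rbar_lt a b)
  (Hxi : forall s, inI a b s -> dot (xi s) (xi s) = 1)
  (Hk1 : forall s, inI a b s -> forall n, ex_derive_n k1 n s)
  (Hk2 : forall s, inI a b s -> forall n, ex_derive_n k2 n s)
  (Hng : forall s, inI a b s -> 0 < k1 s)
  (HTT : forall s, inI a b s -> dot (T s) (T s) = 1)
  (HNN : forall s, inI a b s -> dot (N s) (N s) = 1)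
  (HBB : forall s, inI a b s -> dot (B s) (B s) = 1)
  (HTN : forall s, inI a b s -> dot (T s) (N s) = 0)
  (HTB : forall s, inI a b s -> dot (T s) (B s) = 0)
  (HNB : forall s, inI a b s -> dot (N s) (B s) = 0)
  (HfT : forall s, inI a b s -> vis_derive T s (vscal (k1 s) (N s)))
  (HfN : forall s, inI a b s ->
           vis_derive N s (vadd (vscal (- k1 s) (T s)) (vscal (k2 s) (B s))))
  (HfB : forall s, inI a b s -> vis_derive B s (vscal (- k2 s) (N s))) :
  let A := fun s => Acoef (r s) (f s) (fp s) in
  let L := fun s => Lcoef (r s) (f s) (fp s) in
  let eT := fun s => dot (T s) (xi s) in
  let eN := fun s => dot (N s) (xi s) in
  let eB := fun s => dot (B s) (xi s) in
  (forall s, inI a b s -> tau3 (A s) (L s) (xi s) T s = vzero)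
  <->
  (forall s, inI a b s ->
     Derive_n k1 0 s * Derive_n k1 3 s + 2 * Derive_n k1 1 s * Derive_n k1 2 s - 2 * Derive_n k1 0 s ^ 3 * Derive_n k1 1 s
       - Derive_n k2 0 s ^ 2 * Derive_n k1 0 s * Derive_n k1 1 s - Derive_n k1 0 s ^ 2 * Derive_n k2 0 s * Derive_n k2 1 s = 0
     /\
     Derive_n k1 4 s - 10 * Derive_n k1 0 s ^ 2 * Derive_n k1 2 s - 6 * Derive_n k2 0 s ^ 2 * Derive_n k1 2 s
       - 4 * Derive_n k1 0 s * Derive_n k2 0 s * Derive_n k2 2 s - 15 * Derive_n k1 0 s * Derive_n k1 1 s ^ 2
       - 12 * Derive_n k2 0 s * Derive_n k2 1 s * Derive_n k1 1 s - 3 * Derive_n k1 0 s * Derive_n k2 1 s ^ 2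
       + Derive_n k1 0 s ^ 5 + Derive_n k1 0 s * Derive_n k2 0 s ^ 4 + 2 * Derive_n k1 0 s ^ 3 * Derive_n k2 0 s ^ 2
       + (Derive_n k1 2 s - 2 * Derive_n k1 0 s ^ 3 - Derive_n k1 0 s * Derive_n k2 0 s ^ 2)
           * (A s - L s * (eT s ^ 2 + eN s ^ 2))
       - (Derive_n k1 0 s ^ 2 * Derive_n k2 0 s * eT s + (2 * Derive_n k2 0 s * Derive_n k1 1 s + Derive_n k1 0 s * Derive_n k2 1 s) * eN s)
           * L s * eB s = 0
     /\
     4 * Derive_n k2 0 s * Derive_n k1 3 s + 6 * Derive_n k1 2 s * Derive_n k2 1 s + 4 * Derive_n k1 1 s * Derive_n k2 2 s
       - 9 * Derive_n k1 0 s ^ 2 * Derive_n k2 0 s * Derive_n k1 1 s - 4 * Derive_n k2 0 s ^ 3 * Derive_n k1 1 s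
       - 6 * Derive_n k1 0 s * Derive_n k2 0 s ^ 2 * Derive_n k2 1 s - Derive_n k2 1 s * Derive_n k1 0 s ^ 3 + Derive_n k1 0 s * Derive_n k2 3 s
       + (2 * Derive_n k1 1 s * Derive_n k2 0 s + Derive_n k1 0 s * Derive_n k2 1 s)
           * (A s - L s * (eT s ^ 2 + eB s ^ 2))
       + (Derive_n k1 0 s ^ 2 * Derive_n k2 0 s * eT s - (Derive_n k1 2 s - 2 * Derive_n k1 0 s ^ 3 - Derive_n k1 0 s * Derive_n k2 0 s ^ 2) * eB s)
           * L s * eN s = 0).
Proof.
  intros A L eT eN eB.
  assert (I_open : forall s, inI a b s -> locally s (inI a b))
    by (intros s Hs; exact (open_and _ _ (open_Rbar_gt a) (open_Rbar_lt b) s Hs)).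
  assert (iff_at : forall s, inI a b s ->
    tau3 (A s) (L s) (xi s) T s = vzero <->
    triharmonic_T k1 k2 s = 0 /\
    triharmonic_N k1 k2 s (A s) (L s) (eT s) (eN s) (eB s) = 0 /\
    triharmonic_B k1 k2 s (A s) (L s) (eT s) (eN s) (eB s) = 0).
  { intros s Hs. apply tau3_eq_vzero_iff.
    - repeat split; auto.
    - intros n Hn.
      exact (Dn_T_in_frame _ k1 k2 T N B I_open Hk1 Hk2 HfT HfN HfB n s Hn Hs). }
  split; intros H s Hs.
  - exact (proj1 (iff_at s Hs) (H s Hs)).
  - exact (proj2 (iff_at s Hs) (H s Hs)).
Qed.
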